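(* Let $\Omega$ be a set, $G=S_\Omega$, $H\subseteq G$ any set of permutations, and $\mathcal Q$ a second-order structure on $\Omega$. (1) A first-order or second-order relation $Q$ on $\Omega$ (of finite type) belongs to $\mathrm{Inv}(\mathrm{Aut}(\mathcal Q))$ if and only if $Q$ is definable in $\mathscr L_{\infty\infty}(\mathcal Q)$. (2) $\mathrm{Aut}(\mathrm{Inv}(H))$ is the smallest subgroup of $G$ including $H$.
   Context: A (finite) second-order relation of type $(i_1,\dots,i_k)$ on $\Omega$ is a subset of $\mathcal P(\Omega^{i_1})\times\cdots\times\mathcal P(\Omega^{i_k})$ with $k,i_1,\dots,i_k$ finite; a first-order relation is a subset of $\Omega^n$, $n$ finite. A second-order structure on $\Omega$ is a set of first-order and second-order relations of this kind. A permutation $g$ preserves a first-order relation $R$ if $gR=R$, and preserves a second-order relation $Q$ of type $(i_1,\dots,i_k)$ if for all $R_j\subseteq\Omega^{i_j}$: $(R_1,\dots,R_k)\in Q$ iff $(gR_1,\dots,gR_k)\in Q$. $\mathrm{Aut}(\mathcal Q)$ is the set of permutations of $\Omega$ preserving every member of $\mathcal Q$; $\mathrm{Inv}(H)$ is the set of all (finite-type) first-order and second-order relations on $\Omega$ preserved by every $h\in H$. $\mathscr L_{\infty\infty}(\mathcal Q)$ is the infinitary logic with equality (arbitrary conjunctions and disjunctions, quantification over arbitrary sequences of variables) with a predicate symbol for each first-order relation of $\mathcal Q$ and a generalized quantifier symbol for each second-order relation of $\mathcal Q$, interpreted on $\Omega$ in the standard Lindström way: for $Q$ of type $(i_1,\dots,i_k)$,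 $\bar Q\,\bar x_1\dots\bar x_k(\phi_1,\dots,\phi_k)$ holds under an assignment iff $(\|\phi_1\|,\dots,\|\phi_k\|)\in Q$, where $\|\phi_j\|$ is the set of $i_j$-tuples satisfying $\phi_j$ in the variables $\bar x_j$. A first-order relation $R\subseteq\Omega^n$ is definable in $\mathscr L_{\infty\infty}(\mathcal Q)$ if some formula $\phi(x_1,\dots,x_n)$ (without parameters) defines it in $(\Omega,\mathcal Q)$. A second-order relation $Q$ of type $(i_1,\dots,i_k)$ is definable in $\mathscr L_{\infty\infty}(\mathcal Q)$ if there is a sentence $\phi(\bar R_1,\dots,\bar R_k)$ of $\mathscr L_{\infty\infty}(\mathcal Q)$ expanded by new predicate symbols $\bar R_j$ of arity $i_j$ such that for all $R_j\subseteq\Omega^{i_j}$: $(\Omega,\mathcal Q,R_1,\dots,R_k)\models\phi$ iff $(R_1,\dots,R_k)\in Q$. *)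

From Stdlib Require Import Fin.


Definition FORel (Omega : Type) (n : nat) := (Fin.t n -> Omega) -> Prop.

Definition SORel (Omega : Type) (k : nat) (ty : Fin.t k -> nat) :=
  (forall j : Fin.t k, FORel Omega (ty j)) -> Prop.

Record Sig := {
  fsym : Type;
  far  : fsym -> nat;
  qsym : Type;
  qk   : qsym -> nat;
  qty  : forall q : qsym, Fin.t (qk q) -> nat }.

Record Structure (Omega : Type) (s : Sig) := {
  finterp : forall f : fsym s, FORel Omega (far s f);
  qinterp : forall q : qsym s, SORel Omega (qk s q) (qty s q) }.

Arguments finterp {Omega s} _ _.
Arguments qinterp {Omega s} _ _.
Set Implicit Arguments.

(* Formulas of L_{oo oo}(s) whose (free) variables range over X.
   Quantifiers bind an arbitrary family of new variables indexed by J;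
   a generalized quantifier binds, in its j-th argument, a tuple of
   (distinct) new variables of length qty q j. *)
Inductive formula (s : Sig) : Type -> Type :=
| FEq   : forall X : Type, X -> X -> formula s X
| FAtom : forall X : Type, forall f : fsym s, (Fin.t (far s f) -> X) -> formula s X
| FNot  : forall X : Type, formula s X -> formula s X
| FAnd  : forall X : Type, forall I : Type, (I -> formula s X) -> formula s X
| FOr   : forall X : Type, forall I : Type, (I -> formula s X) -> formula s X
| FEx   : forall X : Type, forall J : Type, formula s (X + J) -> formula s X
| FAll  : forall X : Type, forall J : Type, formula s (X + J) -> formula s X
| FGQ   : forall X : Type, forall q : qsym s,
            (forall j : Fin.t (qk s q), formula s (X + Fin.t (qty s q j))) ->
            formula s X.

Definition extend_asg (Omega X J : Type) (v : X -> Omega) (a : J -> Omega)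
  : X + J -> Omega :=
  fun x => match x with inl y => v y | inr j => a j end.

Fixpoint sat (Omega : Type) (s : Sig) (M : Structure Omega s)
  (X : Type) (phi : formula s X) {struct phi} : (X -> Omega) -> Prop :=
  match phi in formula _ X0 return (X0 -> Omega) -> Prop with
  | @FEq _ _ x y => fun v => v x = v y
  | @FAtom _ _ f xs => fun v => finterp M f (fun i => v (xs i))
  | @FNot _ _ psi => fun v => ~ sat M psi v
  | @FAnd _ _ _ fs => fun v => forall i, sat M (fs i) v
  | @FOr _ _ _ fs => fun v => exists i, sat M (fs i) v
  | @FEx _ _ J psi => fun v => exists a : J -> Omega, sat M psi (extend_asg v a)
  | @FAll _ _ J psi => fun v => forall a : J -> Omega, sat M psi (extend_asg v a)
  | @FGQ _ _ q fs => fun v =>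
      qinterp M q (fun j => fun a => sat M (fs j) (extend_asg v a))
  end.

(* Definability of a first-order relation: a formula whose free variables
   are exactly x_1..x_n (no parameters) defining R. *)
Definition fo_definable (Omega : Type) (s : Sig) (M : Structure Omega s)
  (n : nat) (R : FORel Omega n) : Prop :=
  exists phi : formula s (Fin.t n), forall t, sat M phi t <-> R t.

Definition sig_expand (s : Sig) (k : nat) (ty : Fin.t k -> nat) : Sig := {|
  fsym := fsym s + Fin.t k;
  far  := fun f => match f with inl f0 => far s f0 | inr j => ty j end;
  qsym := qsym s;
  qk   := qk s;
  qty  := qty s |}.

Definition struct_expand (Omega : Type) (s : Sig) (M : Structure Omega s)
  (k : nat) (ty : Fin.t k -> nat) (Rs : forall j, FORel Omega (ty j))
  : Structure Omega (sig_expand s ty) := {|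
  finterp := fun f => match f as f0 return FORel Omega (far (sig_expand s ty) f0) with
                      | inl f0 => finterp M f0
                      | inr j => Rs j end;
  qinterp := qinterp M |}.

Definition no_vars (Omega : Type) : Empty_set -> Omega :=
  fun e => match e with end.

Definition so_definable (Omega : Type) (s : Sig) (M : Structure Omega s)
  (k : nat) (ty : Fin.t k -> nat) (Q : SORel Omega k ty) : Prop :=
  exists phi : formula (sig_expand s ty) Empty_set,
    forall Rs : forall j, FORel Omega (ty j),
      sat (@struct_expand Omega s M k ty Rs) phi (@no_vars Omega) <-> Q Rs.

Definition bij (Omega : Type) (g : Omega -> Omega) : Prop :=
  exists h : Omega -> Omega, (forall x, h (g x) = x) /\ (forall x, g (h x) = x).

Definition fo_img (Omega : Type) (n : nat) (g : Omega -> Omega) (R : FORel Omega n)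
  : FORel Omega n :=
  fun t => exists u, R u /\ forall i, t i = g (u i).

Definition preserves_fo (Omega : Type) (n : nat) (g : Omega -> Omega) (R : FORel Omega n) :=
  forall t, fo_img g R t <-> R t.

Definition preserves_so (Omega : Type) (k : nat) (ty : Fin.t k -> nat)
  (g : Omega -> Omega) (Q : SORel Omega k ty) :=
  forall Rs : forall j, FORel Omega (ty j), Q Rs <-> Q (fun j => fo_img g (Rs j)).

Definition Aut (Omega : Type) (s : Sig) (M : Structure Omega s) (g : Omega -> Omega) :=
  bij g /\ (forall f, preserves_fo g (finterp M f))
        /\ (forall q, preserves_so g (qinterp M q)).

Definition Inv_fo (Omega : Type) (H : (Omega -> Omega) -> Prop) (n : nat) (R : FORel Omega n) :=
  forall h, H h -> preserves_fo h R.
Definition Inv_so (Omega : Type) (H : (Omega -> Omega) -> Prop)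
  (k : nat) (ty : Fin.t k -> nat) (Q : SORel Omega k ty) :=
  forall h, H h -> preserves_so h Q.

Definition AutInv (Omega : Type) (H : (Omega -> Omega) -> Prop) (g : Omega -> Omega) :=
  bij g
  /\ (forall (n : nat) (R : FORel Omega n), Inv_fo H R -> preserves_fo g R)
  /\ (forall (k : nat) (ty : Fin.t k -> nat) (Q : SORel Omega k ty),
        Inv_so H Q -> preserves_so g Q).

Definition is_subgroup (Omega : Type) (S : (Omega -> Omega) -> Prop) :=
  (forall g, S g -> bij g)
  /\ S (fun x => x)
  /\ (forall g h, S g -> S h -> S (fun x => g (h x)))
  /\ (forall g h, S g -> (forall x, h (g x) = x) -> (forall x, g (h x) = x) -> S h).

(* Definable relations are Aut-invariant because satisfaction is
   invariant under isomorphisms of structures ([sat_iso]).  Conversely, since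
   L_{oo oo} allows one new variable per element of Omega, there is a formula
   [AutF] in the variables (y_a)_{a in Omega} stating that a |-> y_a is an
   automorphism (a "diagram" of the structure, [sat_AutF]).  An Aut-invariant
   relation R is then defined by "exists y, y is an automorphism and x is in
   the image of R under y" ([inv_def_fo]); for a second-order Q one quantifies
   over automorphisms y and members Rs' of Q with Rs = y Rs' ([inv_def_so]),
   using the diagram lifted to the expanded signature.

   Preserving a relation is closed under identity, composition and
   inverses, so Aut(Inv(H)) is a subgroup containing H.  For minimality, fix a
   well-order W of Omega (only the identity preserves it, [rigid]); for a
   subgroup S containing H, the second-order relation {s W | s in S} is
   H-invariant, so g in Aut(Inv(H)) maps W to some s W with s in S, whence
   s^-1 g = id and g = s ([AutInv_min]). *)

From Stdlib Require Import Fin.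
From Stdlib Require Import Classical ClassicalEpsilon FunctionalExtensionality PropExtensionality.
From mathcomp Require ssreflect ssrbool eqtype boolp wochoice.

Set Implicit Arguments.

Module WellOrder.
Import ssreflect ssrbool eqtype boolp wochoice.

Lemma well_order_exists (T : Type) : exists W : T -> T -> Prop,
  (forall A : T -> Prop, (exists x, A x) -> exists z, A z /\ forall x, A x -> W z x) /\
  (forall a b, W a b -> W b a -> a = b).
Proof.
have [R woR] := well_ordering_principle {classic T}.
have antiR : antisymmetric R.
  by move=> x y; apply: (wo_chain_antisymmetric (withinW woR)).
exists (fun a b => R a b); split => [A [x Ax]|a b Rab Rba]; last by apply: antiR; rewrite Rab Rba.
have [|z [[Az lbz] _]] := woR (fun y => `[< A y >]); first by exists x; apply/asboolP.
by exists z; split=> [|y Ay]; [apply/asboolP | apply: lbz; apply/asboolP].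
Qed.
End WellOrder.

Section Images.
Variable Omega : Type.

Lemma bij_inj (g : Omega -> Omega) : bij g -> forall x y, g x = g y -> x = y.
Proof. intros [h [H1 _]] x y E. rewrite <- (H1 x), <- (H1 y), E; reflexivity. Qed.

Lemma bij_comp (g h : Omega -> Omega) : bij g -> bij h -> bij (fun x => g (h x)).
Proof.
  intros [g' [G1 G2]] [h' [H1 H2]]. exists (fun x => h' (g' x)); split; intro x.
  - rewrite G1; auto.
  - rewrite H2; auto.
Qed.

Lemma fo_img_id n (R : FORel Omega n) : fo_img (fun x => x) R = R.
Proof.
  apply functional_extensionality; intro t; apply propositional_extensionality; split.
  - intros [u [Ru Ht]]. replace t with u; auto. apply functional_extensionality; auto.
  - intro Rt; exists t; split; auto.
Qed.

Lemma fo_img_comp n (g h : Omega -> Omega) (R : FORel Omega n) :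
  fo_img g (fo_img h R) = fo_img (fun x => g (h x)) R.
Proof.
  apply functional_extensionality; intro t; apply propositional_extensionality; split.
  - intros [u [[w [Rw Hu]] Ht]]. exists w; split; auto. intro i; rewrite Ht, Hu; reflexivity.
  - intros [w [Rw Ht]]. exists (fun i => h (w i)); split; auto. exists w; split; auto.
Qed.

Lemma fo_img_cancel n (g h : Omega -> Omega) (R : FORel Omega n) :
  (forall x, h (g x) = x) -> fo_img h (fo_img g R) = R.
Proof.
  intro K. rewrite fo_img_comp.
  replace (fun x => h (g x)) with (fun x : Omega => x) by (apply functional_extensionality; auto).
  apply fo_img_id.
Qed.

Lemma fo_img_app n (g : Omega -> Omega) (R : FORel Omega n) u : bij g ->
  fo_img g R (fun i => g (u i)) <-> R u.
Proof.
  intro B; split.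
  - intros [w [Rw Hw]]. replace u with w; auto. apply functional_extensionality; intro i.
    symmetry; apply (bij_inj B); auto.
  - intro Ru; exists u; split; auto.
Qed.

Lemma fo_img_charac n (g : Omega -> Omega) (R R' : FORel Omega n) : bij g ->
  (forall u, R (fun i => g (u i)) <-> R' u) -> R = fo_img g R'.
Proof.
  intros B HR. apply functional_extensionality; intro t; apply propositional_extensionality.
  pose proof B as [h [_ H2]].
  assert (Et : t = fun i => g (h (t i))) by (apply functional_extensionality; auto).
  rewrite Et, (HR (fun i => h (t i))), fo_img_app by exact B. tauto.
Qed.

Lemma preserves_fo_eq n (g : Omega -> Omega) (R : FORel Omega n) :
  preserves_fo g R <-> fo_img g R = R.
Proof.
  split.
  - intro P; apply functional_extensionality; intro t; apply propositional_extensionality; apply P.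
  - intros E t; rewrite E; tauto.
Qed.

Lemma preserves_fo_iff n (g : Omega -> Omega) (R : FORel Omega n) : bij g ->
  preserves_fo g R <-> forall u, R (fun i => g (u i)) <-> R u.
Proof.
  intro B. rewrite preserves_fo_eq. split.
  - intros E u. rewrite <- (fo_img_app R u B), E. tauto.
  - intro HR. symmetry; apply fo_img_charac; auto.
Qed.

Definition so_img {k : nat} {ty : Fin.t k -> nat} (g : Omega -> Omega)
  (Rs : forall j, FORel Omega (ty j)) : forall j, FORel Omega (ty j) :=
  fun j => fo_img g (Rs j).

Lemma so_img_id {k : nat} {ty : Fin.t k -> nat} (Rs : forall j, FORel Omega (ty j)) :
  so_img (fun x => x) Rs = Rs.
Proof. apply functional_extensionality_dep; intro j; apply fo_img_id. Qed.

Lemma so_img_comp {k : nat} {ty : Fin.t k -> nat} (g h : Omega -> Omega)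
  (Rs : forall j, FORel Omega (ty j)) :
  so_img g (so_img h Rs) = so_img (fun x => g (h x)) Rs.
Proof. apply functional_extensionality_dep; intro j; apply fo_img_comp. Qed.

Lemma so_img_cancel {k : nat} {ty : Fin.t k -> nat} (g h : Omega -> Omega)
  (Rs : forall j, FORel Omega (ty j)) :
  (forall x, h (g x) = x) -> so_img h (so_img g Rs) = Rs.
Proof. intro K; apply functional_extensionality_dep; intro j; apply fo_img_cancel, K. Qed.

End Images.

Section PreservationGroup.
Variable Omega : Type.
Implicit Types g h : Omega -> Omega.

Lemma preserves_fo_id n (R : FORel Omega n) : preserves_fo (fun x => x) R.
Proof. apply preserves_fo_eq, fo_img_id. Qed.

Lemma preserves_fo_comp n g h (R : FORel Omega n) :
  preserves_fo g R -> preserves_fo h R -> preserves_fo (fun x => g (h x)) R.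
Proof.
  rewrite !preserves_fo_eq. intros Eg Eh. rewrite <- (fo_img_comp g h R), Eh; exact Eg.
Qed.

Lemma preserves_fo_inv n g h (R : FORel Omega n) :
  (forall x, h (g x) = x) -> preserves_fo g R -> preserves_fo h R.
Proof.
  intro K. rewrite !preserves_fo_eq. intro Eg.
  rewrite <- Eg at 1. apply fo_img_cancel, K.
Qed.

Lemma preserves_so_id k (ty : Fin.t k -> nat) (Q : SORel Omega k ty) :
  preserves_so (fun x => x) Q.
Proof. intro Rs; change (Q Rs <-> Q (so_img (fun x => x) Rs)); rewrite so_img_id; tauto. Qed.

Lemma preserves_so_comp k (ty : Fin.t k -> nat) g h (Q : SORel Omega k ty) :
  preserves_so g Q -> preserves_so h Q -> preserves_so (fun x => g (h x)) Q.
Proof.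
  intros Pg Ph Rs. change (Q Rs <-> Q (so_img (fun x => g (h x)) Rs)).
  rewrite <- so_img_comp, (Ph Rs). apply Pg.
Qed.

Lemma preserves_so_inv k (ty : Fin.t k -> nat) g h (Q : SORel Omega k ty) :
  (forall x, g (h x) = x) -> preserves_so g Q -> preserves_so h Q.
Proof.
  intros K Pg Rs. change (Q Rs <-> Q (so_img h Rs)).
  rewrite (Pg (so_img h Rs)). fold (so_img g (so_img h Rs)).
  rewrite so_img_cancel by exact K. tauto.
Qed.

End PreservationGroup.

Section Isomorphisms.
Variable Omega : Type.

Definition iso s (M1 M2 : Structure Omega s) (g : Omega -> Omega) : Prop :=
  bij g
  /\ (forall f u, finterp M2 f (fun i => g (u i)) <-> finterp M1 f u)
  /\ (forall q Rs, qinterp M2 q (so_img g Rs) <-> qinterp M1 q Rs).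

Lemma Aut_iso s (M : Structure Omega s) (g : Omega -> Omega) : Aut M g <-> iso M M g.
Proof.
  split; intros [B [PF PQ]]; (split; [exact B | split]).
  - intros f; apply preserves_fo_iff, PF; exact B.
  - intros q Rs; symmetry; apply PQ.
  - intro f; apply preserves_fo_iff, PF; exact B.
  - intros q Rs; symmetry; apply PQ.
Qed.

Lemma extend_asg_comp X J (g : Omega -> Omega) (v : X -> Omega) (a : J -> Omega) :
  extend_asg (fun x => g (v x)) (fun j => g (a j)) = (fun x => g (extend_asg v a x)).
Proof. apply functional_extensionality; intros [y|j]; reflexivity. Qed.

Lemma sat_iso s (M1 M2 : Structure Omega s) (g : Omega -> Omega) :
  iso M1 M2 g ->
  forall X (phi : formula s X) v, sat M2 phi (fun x => g (v x)) <-> sat M1 phi v.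
Proof.
  intros [B [HF HQ]]. pose proof B as [h [H1 H2]].
  assert (Eg : forall J (a : J -> Omega), a = fun j => g (h (a j)))
    by (intros J a; apply functional_extensionality; auto).
  induction phi; intro v; simpl.
  - split; intro E; [apply (bij_inj B); auto | rewrite E; reflexivity].
  - apply HF.
  - rewrite IHphi; tauto.
  - split; intros A i; apply H; auto.
  - split; intros [i A]; exists i; apply H; auto.
  - split; intros [a A].
    + exists (fun j => h (a j)). apply IHphi. rewrite <- extend_asg_comp, <- Eg; exact A.
    + exists (fun j => g (a j)). rewrite extend_asg_comp. apply IHphi; auto.
  - split; intros A a.
    + apply IHphi. rewrite <- extend_asg_comp. apply A.
    + rewrite (Eg _ a), extend_asg_comp. apply IHphi; auto.
  - rewrite <- HQ.
    match goal with |- qinterp _ _ ?A <-> qinterp _ _ ?B => replace B with A; [tauto|] end.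
    apply functional_extensionality_dep; intro j.
    apply fo_img_charac; auto. intro a.
    rewrite extend_asg_comp. apply H.
Qed.

Lemma iso_expand s (M : Structure Omega s) (g : Omega -> Omega)
  k (ty : Fin.t k -> nat) (Rs : forall j, FORel Omega (ty j)) :
  iso M M g -> iso (struct_expand M ty Rs) (struct_expand M ty (so_img g Rs)) g.
Proof.
  intros [B [HF HQ]]. split; [exact B | split].
  - intros [f|j] u; simpl; [apply HF | apply fo_img_app; exact B].
  - intros q Rs'; apply HQ.
Qed.

Lemma def_inv_fo s (M : Structure Omega s) n (R : FORel Omega n) :
  fo_definable M R -> Inv_fo (Aut M) R.
Proof.
  intros [phi Hphi] g A. rewrite Aut_iso in A.
  apply preserves_fo_iff; [apply A|]. intro u.
  rewrite <- !Hphi. apply (sat_iso A).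
Qed.

Lemma def_inv_so s (M : Structure Omega s) k (ty : Fin.t k -> nat) (Q : SORel Omega k ty) :
  so_definable M Q -> Inv_so (Aut M) Q.
Proof.
  intros [phi Hphi] g A Rs. rewrite Aut_iso in A.
  change (Q Rs <-> Q (so_img g Rs)). rewrite <- !Hphi.
  assert (E : (fun x : Empty_set => g (no_vars Omega x)) = no_vars Omega)
    by (apply functional_extensionality; intros []).
  rewrite <- E at 2. symmetry; apply sat_iso, iso_expand, A.
Qed.

End Isomorphisms.

Section Combinators.
Variable Omega : Type.
Variable s : Sig.
Variable M : Structure Omega s.

Definition fand2 X (a b : formula s X) : formula s X :=
  FAnd (fun b0 : bool => if b0 then a else b).

Lemma sat_fand2 X (a b : formula s X) v :
  sat M (fand2 a b) v <-> sat M a v /\ sat M b v.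
Proof.
  simpl. split.
  - intro H; split; [apply (H true) | apply (H false)].
  - intros [A B] [|]; auto.
Qed.

Definition fiff X (P : Prop) (phi : formula s X) : formula s X :=
  fand2 (FAnd (fun _ : P => phi)) (FAnd (fun _ : ~ P => FNot phi)).

Lemma sat_fiff X (P : Prop) (phi : formula s X) v :
  sat M (fiff P phi) v <-> (sat M phi v <-> P).
Proof.
  unfold fiff. rewrite sat_fand2. simpl. split.
  - intros [Hpos Hneg]. split; [|auto].
    intro S. apply NNPP; intro N. exact (Hneg N S).
  - intro H. split; [intro p; apply H, p | intros p S; exact (p (proj1 H S))].
Qed.

Lemma sat_all_fiff X I (P : I -> Prop) (phi : I -> formula s X) v :
  sat M (FAnd (fun i => fiff (P i) (phi i))) v <-> forall i, sat M (phi i) v <-> P i.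
Proof. split; intros H i; apply sat_fiff, H. Qed.

Definition fimg Y n (x : Fin.t n -> Y) (e : Omega -> Y) (R : FORel Omega n) : formula s Y :=
  FOr (fun p : {u : Fin.t n -> Omega | R u} =>
    FAnd (fun i : Fin.t n => FEq s (x i) (e (proj1_sig p i)))).

Lemma sat_fimg Y n (x : Fin.t n -> Y) (e : Omega -> Y) (R : FORel Omega n) v :
  sat M (fimg x e R) v <-> fo_img (fun a => v (e a)) R (fun i => v (x i)).
Proof.
  simpl. split.
  - intros [[u Ru] H]. exists u; split; auto.
  - intros [u [Ru H]]. exists (exist _ u Ru). auto.
Qed.

End Combinators.

(* The diagram of M: a formula in the variables (y_a)_{a in Omega}, placed
   after the variables X, expressing that a |-> y_a is an automorphism. *)
Section Diagram.
Variable Omega : Type.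
Variable s : Sig.
Variable M : Structure Omega s.

Definition fbij X : formula s (X + Omega) :=
  fand2 (FAnd (fun p : Omega * Omega => fiff (fst p = snd p) (FEq s (inr (fst p)) (inr (snd p)))))
        (FAll (J := unit) (FOr (fun a : Omega => FEq s (inr tt) (inl (inr a))))).

Definition fpres_atoms X : formula s (X + Omega) :=
  FAnd (fun fu : {f : fsym s & Fin.t (far s f) -> Omega} =>
    fiff (finterp M (projT1 fu) (projT2 fu)) (FAtom s (projT1 fu) (fun i => inr (projT2 fu i)))).

Definition fpres_quants X : formula s (X + Omega) :=
  FAnd (fun qR : {q : qsym s & forall j, FORel Omega (qty s q j)} =>
    fiff (qinterp M (projT1 qR) (projT2 qR))
         (FGQ (projT1 qR) (fun j => fimg s inr (fun a => inl (inr a)) (projT2 qR j)))).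

Definition AutF X : formula s (X + Omega) :=
  fand2 (fbij X) (fand2 (fpres_atoms X) (fpres_quants X)).

Lemma sat_fbij X (v : X -> Omega) y : sat M (fbij X) (extend_asg v y) <-> bij y.
Proof.
  unfold fbij. rewrite sat_fand2, sat_all_fiff. simpl. split.
  - intros [Inj Surj].
    pose (h z := proj1_sig (constructive_indefinite_description _ (Surj (fun _ => z)))).
    exists h. split; intro x; unfold h;
      destruct (constructive_indefinite_description _ _) as [a Ha]; simpl in *.
    + apply (Inj (a, x)); simpl; auto.
    + auto.
  - intros B. split.
    + intros [a b]; simpl. split; [apply (bij_inj B) | intros ->; reflexivity].
    + destruct B as [h [_ H2]]. intro a. exists (h (a tt)). auto.
Qed.

Lemma sat_fpres_atoms X (v : X -> Omega) y :
  sat M (fpres_atoms X) (extend_asg v y)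
  <-> forall f u, finterp M f (fun i => y (u i)) <-> finterp M f u.
Proof.
  unfold fpres_atoms. rewrite sat_all_fiff. simpl. split.
  - intros H f u; exact (H (existT _ f u)).
  - intros H [f u]; apply H.
Qed.

Lemma sat_fpres_quants X (v : X -> Omega) y :
  sat M (fpres_quants X) (extend_asg v y)
  <-> forall q Rs, qinterp M q (so_img y Rs) <-> qinterp M q Rs.
Proof.
  unfold fpres_quants. rewrite sat_all_fiff.
  assert (E : forall q (Rs : forall j, FORel Omega (qty s q j)),
      (fun j a => sat M (fimg s inr (fun a => inl (inr a)) (Rs j))
                      (extend_asg (extend_asg v y) a)) = so_img y Rs).
  { intros q Rs. apply functional_extensionality_dep; intro j.
    apply functional_extensionality; intro a; apply propositional_extensionality.
    apply sat_fimg. }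
  split.
  - intros H q Rs. rewrite <- E. exact (H (existT _ q Rs)).
  - intros H [q Rs]. specialize (H q Rs). rewrite <- E in H. exact H.
Qed.

Lemma sat_AutF X (v : X -> Omega) y : sat M (AutF X) (extend_asg v y) <-> Aut M y.
Proof.
  unfold AutF. rewrite Aut_iso, !sat_fand2, sat_fbij, sat_fpres_atoms, sat_fpres_quants.
  reflexivity.
Qed.

End Diagram.

Section Definability.
Variable Omega : Type.
Variable s : Sig.
Variable M : Structure Omega s.

Lemma Aut_id : Aut M (fun x => x).
Proof.
  split; [exists (fun x => x); split; auto | split].
  - intro f; apply preserves_fo_id.
  - intro q; apply preserves_so_id.
Qed.

(* R(x) iff there is an automorphism y and a tuple t in R with x = y t. *)
Lemma inv_def_fo n (R : FORel Omega n) : Inv_fo (Aut M) R -> fo_definable M R.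
Proof.
  intro I.
  exists (FEx (J := Omega) (fand2 (AutF M (Fin.t n)) (fimg s inl inr R))).
  intro x. split.
  - intros [y H]. apply sat_fand2 in H. destruct H as [HA Hx].
    rewrite sat_AutF in HA. rewrite sat_fimg in Hx. apply (I y HA), Hx.
  - intro Rx. exists (fun a => a). apply sat_fand2. split.
    + rewrite sat_AutF. apply Aut_id.
    + rewrite sat_fimg, fo_img_id. exact Rx.
Qed.

Fixpoint lift k (ty : Fin.t k -> nat) X (phi : formula s X) : formula (sig_expand s ty) X :=
  match phi in formula _ X0 return formula (sig_expand s ty) X0 with
  | @FEq _ _ x y => FEq _ x y
  | @FAtom _ _ f xs => FAtom (sig_expand s ty) (inl f) xs
  | @FNot _ _ p => FNot (lift ty p)
  | @FAnd _ _ _ fs => FAnd (fun i => lift ty (fs i))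
  | @FOr _ _ _ fs => FOr (fun i => lift ty (fs i))
  | @FEx _ _ _ p => FEx (lift ty p)
  | @FAll _ _ _ p => FAll (lift ty p)
  | @FGQ _ _ q fs => @FGQ (sig_expand s ty) _ q (fun j => lift ty (fs j))
  end.

Lemma sat_lift k (ty : Fin.t k -> nat) Rs X (phi : formula s X) :
  forall v, sat (struct_expand M ty Rs) (lift ty phi) v <-> sat M phi v.
Proof.
  induction phi; intro v; simpl.
  - reflexivity.
  - reflexivity.
  - rewrite IHphi; reflexivity.
  - split; intros A i; apply H; auto.
  - split; intros [i A]; exists i; apply H; auto.
  - split; intros [a A]; exists a; apply IHphi; auto.
  - split; intros A a; apply IHphi; auto.
  - match goal with |- qinterp _ _ ?A <-> qinterp _ _ ?B => replace B with A; [tauto|] end.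
    apply functional_extensionality_dep; intro j.
    apply functional_extensionality; intro a; apply propositional_extensionality.
    apply H.
Qed.

Definition fnew_img {k : nat} {ty : Fin.t k -> nat} (Rs' : forall j, FORel Omega (ty j))
  : formula (sig_expand s ty) (Empty_set + Omega) :=
  FAnd (fun ju : {j : Fin.t k & Fin.t (ty j) -> Omega} =>
    fiff (Rs' (projT1 ju) (projT2 ju))
         (FAtom (sig_expand s ty) (inr (projT1 ju)) (fun i => inr (projT2 ju i)))).

Lemma sat_fnew_img k (ty : Fin.t k -> nat) (Rs Rs' : forall j, FORel Omega (ty j)) y :
  bij y ->
  sat (struct_expand M ty Rs) (fnew_img Rs') (extend_asg (no_vars Omega) y)
  <-> Rs = so_img y Rs'.
Proof.
  intro B. unfold fnew_img. rewrite sat_all_fiff. simpl. split.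
  - intro H. apply functional_extensionality_dep; intro j.
    apply fo_img_charac; [exact B|]. intro u; exact (H (existT _ j u)).
  - intros -> [j u]. apply fo_img_app, B.
Qed.

(* Q(Rs) iff there are an automorphism y and Rs' in Q with Rs = y Rs'. *)
Lemma inv_def_so k (ty : Fin.t k -> nat) (Q : SORel Omega k ty) :
  Inv_so (Aut M) Q -> so_definable M Q.
Proof.
  intro I.
  exists (FEx (J := Omega) (fand2 (lift ty (AutF M Empty_set))
            (FOr (fun p : {Rs' : forall j, FORel Omega (ty j) | Q Rs'} => fnew_img (proj1_sig p))))).
  intro Rs. split.
  - intros [y H]. apply sat_fand2 in H. destruct H as [HA [[Rs' QRs'] HRs]].
    rewrite sat_lift, sat_AutF in HA. rewrite sat_fnew_img in HRs by apply HA.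
    rewrite HRs. simpl. exact (proj1 (I y HA Rs') QRs').
  - intro QRs. exists (fun a => a). apply sat_fand2. split.
    + rewrite sat_lift, sat_AutF. apply Aut_id.
    + exists (exist _ Rs QRs). rewrite sat_fnew_img by apply Aut_id.
      symmetry; apply so_img_id.
Qed.

End Definability.

Section Closure.
Variable Omega : Type.

Definition rel2 (W : Omega -> Omega -> Prop) : FORel Omega 2 :=
  fun t => W (t Fin.F1) (t (Fin.FS Fin.F1)).

Definition pair2 (a b : Omega) : Fin.t 2 -> Omega :=
  fun i => match i with @Fin.F1 _ => a | @Fin.FS _ _ => b end.

(* Only the identity permutation preserves a well-order: otherwise look at the
   least point m moved by f; both f m < m and m < f m are absurd. *)
Lemma rigid (W : Omega -> Omega -> Prop)
  (Wmin : forall A : Omega -> Prop, (exists x, A x) -> exists z, A z /\ forall x, A x -> W z x)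
  (Wanti : forall a b, W a b -> W b a -> a = b)
  (f : Omega -> Omega) (B : bij f) (P : preserves_fo f (rel2 W)) : forall x, f x = x.
Proof.
  assert (Wf : forall a b, W (f a) (f b) <-> W a b)
    by (intros a b; exact (proj1 (preserves_fo_iff _ B) P (pair2 a b))).
  assert (total : forall a b, W a b \/ W b a).
  { intros a b. destruct (Wmin (fun x => x = a \/ x = b)) as [z [[-> | ->] Hz]]; eauto. }
  pose proof B as [h [H1 H2]].
  apply NNPP; intro N. apply not_all_ex_not in N.
  destruct (Wmin (fun x => f x <> x) N) as [m [Am Hm]].
  assert (below : forall x, W x m -> x <> m -> f x = x).
  { intros x Wxm xm. apply NNPP; intro Ax. exact (xm (Wanti _ _ Wxm (Hm x Ax))). }
  destruct (total (f m) m) as [C|C].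
  - apply Am, (bij_inj B), below; auto.
  - assert (Whm : W (h m) m) by (apply Wf; rewrite H2; exact C).
    assert (hm : h m <> m) by (intro E; apply Am; rewrite <- E at 1; apply H2).
    apply hm. rewrite <- (below _ Whm hm). apply H2.
Qed.

Lemma AutInv_subgroup (H : (Omega -> Omega) -> Prop) : is_subgroup (AutInv H).
Proof.
  split; [|split; [|split]].
  - intros g [B _]; exact B.
  - split; [exists (fun x => x); split; auto | split].
    + intros n R _; apply preserves_fo_id.
    + intros k ty Q _; apply preserves_so_id.
  - intros g h [Bg [Pg Qg]] [Bh [Ph Qh]]. split; [apply bij_comp; auto | split].
    + intros n R I. apply preserves_fo_comp; auto.
    + intros k ty Q I. apply preserves_so_comp; auto.
  - intros g h [Bg [Pg Qg]] H1 H2. split; [exists g; split; auto | split].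
    + intros n R I. eapply preserves_fo_inv; [exact H1 | apply Pg, I].
    + intros k ty Q I. eapply preserves_so_inv; [exact H2 | apply Qg, I].
Qed.

Lemma H_AutInv (H : (Omega -> Omega) -> Prop) (HG : forall h, H h -> bij h) :
  forall h, H h -> AutInv H h.
Proof. intros h Hh. split; [auto | split; intros; auto]. Qed.

(* Given a subgroup S including H and a well-order W, the orbit {s W | s in S}
   is an H-invariant second-order relation; g in Aut(Inv(H)) keeps W in it. *)
Lemma AutInv_min (H : (Omega -> Omega) -> Prop) (HG : forall h, H h -> bij h)
  (S : (Omega -> Omega) -> Prop) : is_subgroup S -> (forall h, H h -> S h) ->
  forall g, AutInv H g -> S g.
Proof.
  intros [SB [Sid [Scomp Sinv]]] HS g [Bg [_ Pg]].
  destruct (WellOrder.well_order_exists Omega) as [W [Wmin Wanti]].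
  pose (Ws := fun _ : Fin.t 1 => rel2 W).
  pose (orbit := fun Rs : forall j : Fin.t 1, FORel Omega 2 =>
                   exists s0, S s0 /\ Rs = so_img s0 Ws).
  assert (orbit_inv : Inv_so H orbit).
  { intros h Hh Rs. pose proof (HG h Hh) as [h' [K1 K2]].
    change (orbit Rs <-> orbit (so_img h Rs)). split.
    - intros [s0 [Ss ->]]. exists (fun x => h (s0 x)).
      split; [apply Scomp; auto | apply so_img_comp].
    - intros [s0 [Ss E]]. exists (fun x => h' (s0 x)).
      split; [apply Scomp; [apply (Sinv h); auto | exact Ss] |].
      rewrite <- (so_img_cancel h h' Rs K1), E. apply so_img_comp. }
  destruct (proj1 (Pg 1 _ orbit orbit_inv Ws)) as [s0 [Ss E]].
  { exists (fun x => x). split; [exact Sid | symmetry; apply so_img_id]. }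
  change (so_img g Ws = so_img s0 Ws) in E.
  pose proof (SB _ Ss) as [s' [T1 T2]].
  assert (fixes : forall x, s' (g x) = x).
  { apply (rigid Wmin Wanti).
    - exact (bij_comp (ex_intro _ s0 (conj T2 T1)) Bg).
    - apply preserves_fo_eq. rewrite <- fo_img_comp.
      change (fo_img s' (so_img g Ws Fin.F1) = rel2 W).
      rewrite E. apply fo_img_cancel, T1. }
  replace g with s0; [exact Ss|].
  apply functional_extensionality; intro x. rewrite <- (T2 (g x)), fixes. reflexivity.
Qed.

End Closure.

Theorem theorem2 (Omega : Type) (H : (Omega -> Omega) -> Prop)
  (HG : forall h, H h -> bij h) (s : Sig) (M : Structure Omega s) :
  (* (1), first-order relations *)
  (forall (n : nat) (R : FORel Omega n),
      Inv_fo (Aut M) R <-> fo_definable M R)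
  /\
  (* (1), second-order relations *)
  (forall (k : nat) (ty : Fin.t k -> nat) (Q : SORel Omega k ty),
      Inv_so (Aut M) Q <-> so_definable M Q)
  /\
  (* (2) Aut(Inv(H)) is the smallest subgroup of Sym(Omega) including H *)
  (is_subgroup (AutInv H)
   /\ (forall h, H h -> AutInv H h)
   /\ (forall S, is_subgroup S -> (forall h, H h -> S h) ->
         forall g, AutInv H g -> S g)).
Proof.
  split; [|split; [|split; [|split]]].
  - intros n R; split; [apply inv_def_fo | apply def_inv_fo].
  - intros k ty Q; split; [apply inv_def_so | apply def_inv_so].
  - apply AutInv_subgroup.
  - apply H_AutInv, HG.
  - intro S; apply AutInv_min, HG.
Qed.
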